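(* Let $\varepsilon,\delta\geq 0$ and let $\mathcal{M},\mathcal{N}$ be CTMCs with $\mathcal{M}\sim_{\varepsilon,\delta}\mathcal{N}$. Then there are CTMCs $\mathcal{M}'$ and $\mathcal{N}'$ with the same graph structure such that $\mathcal{M}\sim_{\varepsilon,0}\mathcal{M}'$, $\mathcal{M}'\sim_{0,\delta}\mathcal{N}'$, and $\mathcal{N}'\sim\mathcal{N}$.
   Context: A CTMC is a tuple $(S,P,E,s_{init},L)$ with $S$ a finite nonempty set of states, $P\colon S\to\mathrm{Distr}(S)$ a transition probability function (self-loops allowed; $P(s,A)=\sum_{a\in A}P(s,a)$), $E\colon S\to\mathbb{R}_{>0}$ an exit rate function, $s_{init}\in S$ an initial state and $L\colon S\to 2^{AP}$ a labeling. Two CTMCs have the same graph structure if they have the same state set, initial state, labeling, and the same pairs of states connected by transitions of positive probability. For a relation $R\subseteq S\times S$ and $A\subseteq S$, $R(A)=\{t\mid\exists s\in A:(s,t)\in R\}$. For $\varepsilon,\delta\geq0$, a reflexive symmetric relation $R$ on the states of a CTMC is an $(\varepsilon,\delta)$-bisimulation if for all $(s,s')\in R$: $L(s)=L(s')$, $|\ln E(s)-\ln E(s')|\leq\delta$, and $P(s,A)\leq P(s',R(A))+\varepsilon$ for all sets of states $A$; $s\sim_{\varepsilon,\delta}s'$ if some $(\varepsilon,\delta)$-bisimulation contains $(s,s')$. A strong bisimulation is an equivalence $R$ with $L(s)=L(s')$, $E(s)=E(s')$ and $P(s,C)=P(s',C)$ for every equivalence class $C$ whenever $(s,s')\in R$;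 $s\sim s'$ if some strong bisimulation contains $(s,s')$. For CTMCs $\mathcal{M}_1,\mathcal{M}_2$, the direct sum $\mathcal{M}_1\oplus\mathcal{M}_2$ is their disjoint union; $\mathcal{M}_1\sim_{\varepsilon,\delta}\mathcal{M}_2$ (resp. $\mathcal{M}_1\sim\mathcal{M}_2$) means that the initial states of $\mathcal{M}_1$ and $\mathcal{M}_2$ satisfy $\sim_{\varepsilon,\delta}$ (resp. $\sim$) in $\mathcal{M}_1\oplus\mathcal{M}_2$. *)

From HB Require Import structures.
From mathcomp Require Import all_boot all_order all_algebra.
From mathcomp Require Import boolp classical_sets reals exp.
Set Implicit Arguments. Unset Strict Implicit. Unset Printing Implicit Defensive.
Import Order.TTheory GRing.Theory Num.Theory.
Local Open Scope ring_scope.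

Record ctmc (R : realType) (AP : Type) (S : finType) := Ctmc {
  ctP : S -> S -> R;
  ctE : S -> R;
  ctinit : S;
  ctL : S -> set AP;
  ctP_ge0 : forall s t, 0 <= ctP s t;
  ctP_sum1 : forall s, \sum_(t : S) ctP s t = 1;
  ctE_gt0 : forall s, 0 < ctE s
}.

Definition Pset (R : realType) (S : finType) (P : S -> S -> R) (s : S) (A : {set S}) : R :=
  \sum_(t in A) P s t.

Definition rel_image (S : finType) (Rl : rel S) (A : {set S}) : {set S} :=
  [set t | [exists s in A, Rl s t]].

Definition is_ed_bisim (R : realType) (AP : Type) (S : finType)
    (P : S -> S -> R) (E : S -> R) (L : S -> set AP) (eps delta : R) (Rl : rel S) : Prop :=
  reflexive Rl /\ symmetric Rl /\
  forall s s', Rl s s' ->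
    [/\ L s = L s',
        `|ln (E s) - ln (E s')| <= delta
      & forall A : {set S}, Pset P s A <= Pset P s' (rel_image Rl A) + eps].

Definition is_strong_bisim (R : realType) (AP : Type) (S : finType)
    (P : S -> S -> R) (E : S -> R) (L : S -> set AP) (Rl : rel S) : Prop :=
  equivalence_rel Rl /\
  forall s s', Rl s s' ->
    [/\ L s = L s', E s = E s'
      & forall u : S, Pset P s [set t | Rl u t] = Pset P s' [set t | Rl u t]].

Section Sum.
Variables (R : realType) (AP : Type) (S1 S2 : finType).
Variables (M1 : ctmc R AP S1) (M2 : ctmc R AP S2).

Definition sumP (x y : (S1 + S2)%type) : R :=
  match x, y with
  | inl s, inl t => ctP M1 s t
  | inr s, inr t => ctP M2 s t
  | _, _ => 0
  end.
Definition sumE (x : (S1 + S2)%type) : R :=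
  match x with inl s => ctE M1 s | inr s => ctE M2 s end.
Definition sumL (x : (S1 + S2)%type) : set AP :=
  match x with inl s => ctL M1 s | inr s => ctL M2 s end.
End Sum.

Definition ed_bisimilar (R : realType) (AP : Type) (S1 S2 : finType)
    (eps delta : R) (M1 : ctmc R AP S1) (M2 : ctmc R AP S2) : Prop :=
  exists Rl : rel (S1 + S2)%type,
    is_ed_bisim (sumP M1 M2) (sumE M1 M2) (sumL M1 M2) eps delta Rl /\
    Rl (inl (ctinit M1)) (inr (ctinit M2)).

Definition strong_bisimilar (R : realType) (AP : Type) (S1 S2 : finType)
    (M1 : ctmc R AP S1) (M2 : ctmc R AP S2) : Prop :=
  exists Rl : rel (S1 + S2)%type,
    is_strong_bisim (sumP M1 M2) (sumE M1 M2) (sumL M1 M2) Rl /\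
    Rl (inl (ctinit M1)) (inr (ctinit M2)).

(* same graph structure (same state set is enforced by the common type S) *)
Definition same_graph (R : realType) (AP : Type) (S : finType) (M N : ctmc R AP S) : Prop :=
  [/\ ctinit M = ctinit N, ctL M = ctL N
    & forall s t, (0 < ctP M s t) <-> (0 < ctP N s t)].

(* If states m and n are (eps, delta)-bisimilar, their transition distributions
   have a coupling putting mass at most eps outside the bisimulation: this is a
   weighted Hall (supply-demand) theorem, applied after adding a dummy demand of
   size eps adjacent to every state, which turns P(m, A) <= P(n, R(A)) + eps into
   Hall's condition.  Let M' and N' live on pairs (m, n) and move according to
   these couplings; M' leaves a related pair at the rate of m and an unrelated one
   at the rate of n, N' always at the rate of n.  Then m is eps-bisimilar to the
   pairs (m, n) with m R n, M' and N' differ only in their rates, and the second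
   projection lumps N' onto N. *)

From HB Require Import structures.
From mathcomp Require Import all_boot all_order all_algebra.
From mathcomp Require Import boolp classical_sets reals exp.
From mathcomp Require Import lra zify.
(* Re-imported so that the finset lemmas shadow their classical_sets namesakes. *)
From mathcomp Require Import fintype finset.
Set Implicit Arguments. Unset Strict Implicit. Unset Printing Implicit Defensive.
Import Order.TTheory GRing.Theory Num.Theory.
Local Open Scope ring_scope.

Section Weights.
Variables (R : realFieldType) (Z : finType).
Implicit Types (B : {set Z}) (f : Z -> R).

Lemma ler_sum_subpred (P Q : pred Z) f : (forall z, P z -> Q z) -> (forall z, 0 <= f z) ->
  \sum_(z | P z) f z <= \sum_(z | Q z) f z.
Proof.
move=> PQ f_ge0; rewrite [X in X <= _]big_mkcond [X in _ <= X]big_mkcond /=.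
by apply: ler_sum => z _; case: ifP => [/PQ -> //|_]; case: ifP.
Qed.

Lemma sum_delta (z0 : Z) (c : R) : \sum_z (if z == z0 then c else 0) = c.
Proof. by rewrite -big_mkcond big_pred1_eq. Qed.

Lemma sum_delta_in B z0 (c : R) :
  \sum_(z in B) (if z == z0 then c else 0) = if z0 \in B then c else 0.
Proof.
rewrite -big_mkcondr /=; case: ifP => z0B.
  by rewrite (big_pred1 z0) // => z /=; case: eqP => [->|]; rewrite ?z0B ?andbF.
by rewrite big_pred0 // => z /=; case: eqP => [->|]; rewrite ?z0B ?andbF.
Qed.

Definition supp f := [set z | f z != 0].

Definition restr B f z := if z \in B then f z else 0.

Definition shift_at z0 (t : R) f z := if z == z0 then f z - t else f z.

Lemma sum_restr B B' f : \sum_(z in B) restr B' f z = \sum_(z in B :&: B') f z.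
Proof.
rewrite big_mkcond [RHS]big_mkcond; apply: eq_bigr => z _.
by rewrite inE /restr; case: (z \in B); case: (z \in B').
Qed.

Lemma sum_setU B B' f :
  \sum_(z in B :|: B') f z = \sum_(z in B) f z + \sum_(z in B' :\: B) f z.
Proof. by rewrite (big_setID B) setUK setDUl setDv set0U. Qed.

Lemma supp_restr B f : supp (restr B f) \subset supp f.
Proof. by apply/subsetP => z; rewrite !inE /restr; case: ifP => //; rewrite eqxx. Qed.

Lemma sum_shift_at B z0 t f :
  \sum_(z in B) shift_at z0 t f z = \sum_(z in B) f z - (if z0 \in B then t else 0).
Proof.
rewrite -sum_delta_in -sumrB; apply: eq_bigr => z _.
by rewrite /shift_at; case: eqP; rewrite ?subr0.
Qed.

Lemma supp_shift_at z0 t f : f z0 != 0 -> supp (shift_at z0 t f) \subset supp f.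
Proof.
by move=> fz0; apply/subsetP => z; rewrite !inE /shift_at; case: (eqVneq z z0) => [-> _|].
Qed.

Lemma supp_shift_atI_proper B z0 f : z0 \in B -> f z0 != 0 ->
  B :&: supp (shift_at z0 (f z0) f) \proper B :&: supp f.
Proof.
move=> z0B fz0; rewrite properE setIS ?supp_shift_at //=.
by apply/subsetPn; exists z0; rewrite !inE z0B ?fz0 // /shift_at eqxx subrr eqxx.
Qed.

Lemma finite_min_bound (T : finType) (P : pred T) (g : T -> R) (m : R) :
  exists t, [/\ t <= m, forall a, P a -> t <= g a & t = m \/ exists2 a, P a & t = g a].
Proof.
case: (boolP [exists a, P a && (g a < m)]) => [/existsP[a0 /andP[Pa0 ga0]]|/existsPn ge_m].
  case: (arg_minP g Pa0) => a Pa a_min; exists (g a); split=> //; last by right; exists a.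
  exact: le_trans (a_min _ Pa0) (ltW ga0).
exists m; split=> [|a Pa|]; [exact: lexx | | by left].
by have := ge_m a; rewrite Pa /= -leNgt.
Qed.

End Weights.

Section Transport.
Variables (R : realFieldType) (X Y : finType) (r : X -> Y -> bool).
Implicit Types (A D : {set X}) (mu : X -> R) (nu : Y -> R) (pi : X -> Y -> R).

Definition nbhd A : {set Y} := [set y | [exists x in A, r x y]].

Lemma nbhdP A y : reflect (exists2 x, x \in A & r x y) (y \in nbhd A).
Proof.
rewrite inE; apply: (iffP existsP) => [[x /andP[]]|[x xA rxy]]; first by exists x.
by exists x; rewrite xA.
Qed.

Lemma nbhdS A A' : A \subset A' -> nbhd A \subset nbhd A'.
Proof.
move/subsetP=> sAA'; apply/subsetP => y /nbhdP[x xA rxy].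
by apply/nbhdP; exists x; first exact: sAA'.
Qed.

Lemma nbhdU A A' : nbhd (A :|: A') = nbhd A :|: nbhd A'.
Proof.
apply/setP => y; rewrite in_setU; apply/nbhdP/orP.
  by case=> x /setUP[] xA rxy; [left|right]; apply/nbhdP; exists x.
by case=> /nbhdP[x xA rxy]; exists x; rewrite // inE xA ?orbT.
Qed.

Definition hall_ok D mu nu :=
  [/\ forall x, 0 <= mu x, forall y, 0 <= nu y
    & forall A, A \subset D -> \sum_(x in A) mu x <= \sum_(y in nbhd A) nu y].

Definition transport_plan D mu nu pi :=
  [/\ forall x y, 0 <= pi x y,
      forall x y, ~~ ((x \in D) && r x y) -> pi x y = 0,
      forall x, x \in D -> \sum_y pi x y = mu x
    & forall y, \sum_x pi x y <= nu y].

Definition slack mu nu A := \sum_(y in nbhd A) nu y - \sum_(x in A) mu x.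

Definition hall_size D mu nu := (#|D| + #|D :&: supp mu| + #|supp nu|)%N.

Definition hall_solvable_below n := forall D mu nu,
  (hall_size D mu nu < n)%N -> hall_ok D mu nu -> exists pi, transport_plan D mu nu pi.

Lemma hall_size_ltD D D' mu nu nu' : D' \proper D -> supp nu' \subset supp nu ->
  (hall_size D' mu nu' < hall_size D mu nu)%N.
Proof.
move=> ltD snu; rewrite /hall_size.
have := proper_card ltD; have := subset_leq_card snu.
have := subset_leq_card (setSI (supp mu) (proper_sub ltD)).
lia.
Qed.

Lemma hall_size_shift_le D mu nu x0 y0 t : mu x0 != 0 -> nu y0 != 0 ->
  (hall_size D (shift_at x0 t mu) (shift_at y0 t nu) <= hall_size D mu nu)%N.
Proof.
move=> mux0 nuy0; rewrite /hall_size leq_add // ?leq_add //.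
  exact/subset_leq_card/setIS/supp_shift_at.
exact/subset_leq_card/supp_shift_at.
Qed.

Lemma hall_size_shift_lt D mu nu x0 y0 t : x0 \in D -> mu x0 != 0 -> nu y0 != 0 ->
  t = mu x0 \/ t = nu y0 ->
  (hall_size D (shift_at x0 t mu) (shift_at y0 t nu) < hall_size D mu nu)%N.
Proof.
move=> x0D mux0 nuy0 [->|->]; rewrite /hall_size.
  have := proper_card (supp_shift_atI_proper x0D mux0).
  have := subset_leq_card (supp_shift_at (mu x0) nuy0).
  lia.
have := proper_card (supp_shift_atI_proper (in_setT y0) nuy0); rewrite !setTI.
have := subset_leq_card (setIS D (supp_shift_at (nu y0) mux0)).
lia.
Qed.

Lemma hall_ok_inner D A mu nu : A \subset D -> hall_ok D mu nu ->
  hall_ok A mu (restr (nbhd A) nu).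
Proof.
move=> sAD [mu_ge0 nu_ge0 hallD]; split=> // [y|B sBA]; first by rewrite /restr; case: ifP.
rewrite sum_restr (setIidPl (nbhdS sBA)).
exact/hallD/(subset_trans sBA).
Qed.

Lemma hall_ok_outer D A mu nu : A \subset D -> hall_ok D mu nu ->
  \sum_(x in A) mu x = \sum_(y in nbhd A) nu y ->
  hall_ok (D :\: A) mu (restr (~: nbhd A) nu).
Proof.
move=> sAD [mu_ge0 nu_ge0 hallD] tight; split=> // [y|B sB].
  by rewrite /restr; case: ifP.
move: sB; rewrite subsetD => /andP[sBD dBA].
have := hallD (A :|: B); rewrite subUset sAD sBD nbhdU !sum_setU (setDidPl dBA).
by rewrite sum_restr -setDE tight => /(_ isT); rewrite lerD2l.
Qed.

Lemma transport_plan_merge D A mu nu1 nu2 nu pi1 pi2 : A \subset D ->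
  transport_plan A mu nu1 pi1 -> transport_plan (D :\: A) mu nu2 pi2 ->
  (forall y, nu1 y + nu2 y <= nu y) ->
  transport_plan D mu nu (fun x y => pi1 x y + pi2 x y).
Proof.
move=> sAD [pi1_ge0 pi1_out pi1_row pi1_col] [pi2_ge0 pi2_out pi2_row pi2_col] le_nu.
split=> [x y|x y nDr|x xD|y].
- by rewrite addr_ge0.
- have nAr : ~~ ((x \in A) && r x y).
    by apply: contra nDr => /andP[/(subsetP sAD) -> ->].
  have nDAr : ~~ ((x \in D :\: A) && r x y).
    by apply: contra nDr => /andP[/setDP[-> _] ->].
  by rewrite pi1_out // pi2_out // addr0.
- rewrite big_split /=; case: (boolP (x \in A)) => xA.
    by rewrite pi1_row // big1 ?addr0 // => y _; apply: pi2_out; rewrite inE xA.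
  rewrite pi2_row ?inE ?xA ?xD // big1 ?add0r // => y _.
  by apply: pi1_out; rewrite (negbTE xA).
- by rewrite big_split /=; apply: le_trans (lerD (pi1_col y) (pi2_col y)) (le_nu y).
Qed.

Lemma transport_tight_split D A mu nu :
  hall_solvable_below (hall_size D mu nu) -> hall_ok D mu nu ->
  A \subset D -> A != set0 -> A != D ->
  \sum_(x in A) mu x = \sum_(y in nbhd A) nu y ->
  exists pi, transport_plan D mu nu pi.
Proof.
move=> IH ok sAD A0 AD tight.
have [pi1 plan1] : exists pi, transport_plan A mu (restr (nbhd A) nu) pi.
  apply: IH (hall_ok_inner sAD ok); apply: hall_size_ltD (supp_restr _ _).
  by rewrite properEneq AD.
have [pi2 plan2] : exists pi, transport_plan (D :\: A) mu (restr (~: nbhd A) nu) pi.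
  apply: IH (hall_ok_outer sAD ok tight); apply: hall_size_ltD (supp_restr _ _).
  rewrite properE subsetDl /=; case/set0Pn: A0 => a aA; apply/subsetPn.
  by exists a; [exact: (subsetP sAD) | rewrite inE aA].
exists (fun x y => pi1 x y + pi2 x y); apply: (transport_plan_merge sAD plan1 plan2).
by move=> y; rewrite /restr in_setC; case: (y \in nbhd A); rewrite ?addr0 ?add0r.
Qed.

Lemma hall_ok_shift D mu nu x0 y0 t : hall_ok D mu nu -> r x0 y0 -> 0 <= t ->
  t <= mu x0 -> t <= nu y0 ->
  (forall A, A \subset D :\ x0 -> y0 \in nbhd A -> t <= slack mu nu A) ->
  hall_ok D (shift_at x0 t mu) (shift_at y0 t nu).
Proof.
move=> [mu_ge0 nu_ge0 hallD] rx0y0 t_ge0 t_mu t_nu t_slack.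
split=> [x|y|A sAD].
- by rewrite /shift_at; case: eqP => [->|]; rewrite ?subr_ge0.
- by rewrite /shift_at; case: eqP => [->|]; rewrite ?subr_ge0.
rewrite !sum_shift_at; have := hallD A sAD.
case: (boolP (x0 \in A)) => x0A.
  have -> : y0 \in nbhd A by apply/nbhdP; exists x0.
  by rewrite /=; lra.
case: (boolP (y0 \in nbhd A)) => y0A /=; last lra.
have := t_slack A; rewrite subsetD1 sAD x0A /slack => /(_ isT y0A).
lra.
Qed.

Lemma transport_plan_unshift D mu nu x0 y0 t pi : x0 \in D -> r x0 y0 -> 0 <= t ->
  transport_plan D (shift_at x0 t mu) (shift_at y0 t nu) pi ->
  transport_plan D mu nu (fun x y => pi x y + (if (x == x0) && (y == y0) then t else 0)).
Proof.
move=> x0D rx0y0 t_ge0 [pi_ge0 pi_out pi_row pi_col].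
split=> [x y|x y nDr|x xD|y].
- by rewrite addr_ge0 //; case: ifP.
- rewrite pi_out // add0r; case: andP => // -[/eqP ex /eqP ey].
  by move: nDr; rewrite ex ey x0D rx0y0.
- rewrite big_split /= pi_row // /shift_at; case: (eqVneq x x0) => [->|nx].
    by rewrite /= sum_delta subrK.
  by rewrite big1 ?addr0 // => y _; rewrite (negbTE nx).
- rewrite big_split /=; have := pi_col y; rewrite /shift_at.
  case: (eqVneq y y0) => [->|ny] pi_col_y.
    rewrite [X in _ + X](eq_bigr (fun x => if x == x0 then t else 0)) => [|x _].
      by rewrite sum_delta; lra.
    by rewrite andbT.
  by rewrite [X in _ + X]big1 ?addr0 // => x _; rewrite andbF.
Qed.

Lemma hall_edge D mu nu x0 : hall_ok D mu nu -> x0 \in D -> 0 < mu x0 ->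
  exists2 y0, r x0 y0 & 0 < nu y0.
Proof.
move=> [_ nu_ge0 hallD] x0D mux0.
have : \sum_(y in nbhd [set x0]) nu y != 0.
  rewrite gt_eqF // (lt_le_trans mux0) //.
  by have := hallD [set x0]; rewrite sub1set x0D big_set1 => /(_ isT).
move/eqP/psumr_neq0P => /(_ (fun y _ => nu_ge0 y)) [y /andP[/nbhdP[x /set1P ->]]].
by exists y.
Qed.

(* Push t units from x0 to y0, with t as large as the Hall condition allows:
   then the supply at x0 or the demand at y0 is exhausted, or some set avoiding
   x0 becomes tight and the problem splits. *)
Lemma transport_step D mu nu x0 :
  hall_solvable_below (hall_size D mu nu) -> hall_ok D mu nu ->
  x0 \in D -> 0 < mu x0 -> exists pi, transport_plan D mu nu pi.
Proof.
move=> IH ok x0D mux0; have [mu_ge0 nu_ge0 hallD] := ok.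
have [y0 rx0y0 nuy0] := hall_edge ok x0D mux0.
pose P A := (A \subset D :\ x0) && (y0 \in nbhd A).
have [t [t_min t_slack t_attained]] :=
  finite_min_bound P (slack mu nu) (Num.min (mu x0) (nu y0)).
have [t_mu t_nu] : t <= mu x0 /\ t <= nu y0 by apply/andP; rewrite -le_min.
have t_ge0 : 0 <= t.
  case: t_attained => [->|[A /andP[sA _] ->]]; first by rewrite le_min !ltW.
  by rewrite subr_ge0 hallD // (subset_trans sA) // subD1set.
have ok' := hall_ok_shift ok rx0y0 t_ge0 t_mu t_nu
  (fun A sA y0A => t_slack A (introT andP (conj sA y0A))).
suff [pi plan] : exists pi, transport_plan D (shift_at x0 t mu) (shift_at y0 t nu) pi.
  by eexists; apply: transport_plan_unshift plan.
have [mux0_neq0 nuy0_neq0] := (lt0r_neq0 mux0, lt0r_neq0 nuy0).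
case: t_attained => [t_eq|[A /andP[sA y0A] t_eq]].
  apply: IH ok'; apply: hall_size_shift_lt => //.
  by move: t_eq; case: lerP => _ ->; [left|right].
have x0A : x0 \notin A by apply: contraL sA => x0A; rewrite subsetD1 x0A andbF.
apply: (@transport_tight_split _ A _ _ _ ok').
- move=> D' mu' nu' lt_size; apply: IH.
  exact: leq_trans lt_size (hall_size_shift_le _ _ mux0_neq0 nuy0_neq0).
- exact: subset_trans sA (subD1set D x0).
- by apply/set0Pn; case/nbhdP: y0A => x xA _; exists x.
- by apply: contraNneq x0A => ->.
- by rewrite !sum_shift_at (negbTE x0A) y0A; rewrite /slack in t_eq; lra.
Qed.

Lemma hall_solvable n : hall_solvable_below n.
Proof.
elim: n => // n IH D mu nu lt_size ok.
have IH' : hall_solvable_below (hall_size D mu nu).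
  by move=> D' mu' nu' lt'; apply: IH; apply: leq_trans lt' _; rewrite -ltnS.
have [mu_ge0 nu_ge0 _] := ok.
case: (boolP [exists x in D, mu x != 0]) => [/exists_inP[x0 x0D mux0]|/exists_inPn mu0].
  by apply: transport_step IH' ok x0D _; rewrite lt0r mux0 mu_ge0.
exists (fun _ _ => 0); split=> // [x xD|y]; last by rewrite big1.
by rewrite big1 //; move: (mu0 x xD); rewrite negbK => /eqP.
Qed.

Theorem hall_transport D mu nu : hall_ok D mu nu -> exists pi, transport_plan D mu nu pi.
Proof. exact: hall_solvable (ltnSn _). Qed.

End Transport.

Section Coupling.
Variables (R : realFieldType) (X Y : finType).
Implicit Types (mu : X -> R) (nu : Y -> R) (pi : X -> Y -> R) (r : X -> Y -> bool).

Definition coupling mu nu pi :=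
  [/\ forall x y, 0 <= pi x y, forall x, \sum_y pi x y = mu x
    & forall y, \sum_x pi x y = nu y].

Definition off_mass r pi := \sum_(q | ~~ r q.1 q.2) pi q.1 q.2.

Lemma coupling_prod mu nu : (forall x, 0 <= mu x) -> (forall y, 0 <= nu y) ->
  \sum_x mu x = 1 -> \sum_y nu y = 1 -> coupling mu nu (fun x y => mu x * nu y).
Proof.
move=> mu_ge0 nu_ge0 mu1 nu1; split=> [x y|x|y]; first exact: mulr_ge0.
  by rewrite -mulr_sumr nu1 mulr1.
by rewrite -mulr_suml mu1 mul1r.
Qed.

Lemma coupling_complete mu nu pi (a : X -> R) (b : Y -> R) :
  (forall x y, 0 <= pi x y) -> (forall x, 0 <= a x) -> (forall y, 0 <= b y) ->
  \sum_y b y = \sum_x a x ->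
  (forall x, \sum_y pi x y + a x = mu x) -> (forall y, \sum_x pi x y + b y = nu y) ->
  coupling mu nu (fun x y => pi x y + a x * b y / \sum_x a x).
Proof.
move=> pi_ge0 a_ge0 b_ge0 sum_ba row col; set c := \sum_x a x.
have cK z : (c = 0 -> z = 0) -> z * c / c = z.
  by case: (eqVneq c 0) => [c0 /(_ c0) ->|c_neq0 _]; rewrite ?mul0r ?mulfK.
split=> [x y|x|y]; first by rewrite addr_ge0 // divr_ge0 ?mulr_ge0 ?sumr_ge0.
  rewrite big_split /= -mulr_suml -mulr_sumr sum_ba cK ?row // => c0.
  exact: psumr_eq0P c0 x isT.
rewrite big_split /= -mulr_suml -mulr_suml -/c [c * _]mulrC cK ?col // => c0.
by apply: (psumr_eq0P (fun y _ => b_ge0 y)) y isT; rewrite sum_ba.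
Qed.

Lemma eps_coupling r mu nu (eps : R) : 0 <= eps ->
  (forall x, 0 <= mu x) -> (forall y, 0 <= nu y) -> \sum_x mu x = 1 -> \sum_y nu y = 1 ->
  (forall A : {set X}, \sum_(x in A) mu x <= \sum_(y in nbhd r A) nu y + eps) ->
  exists2 pi, coupling mu nu pi & off_mass r pi <= eps.
Proof.
move=> eps_ge0 mu_ge0 nu_ge0 mu1 nu1 hall_eps.
(* A dummy demand of size eps, adjacent to every x, absorbs the mass that cannot
   follow r; the deficits a and b it leaves are matched by their product. *)
pose r' x (z : Y + unit) := if z is inl y then r x y else true.
pose nu' (z : Y + unit) := if z is inl y then nu y else eps.
have ok : hall_ok r' setT mu nu'.
  split=> // [[]//|A _].
  case: (set_0Vmem A) => [->|[x0 x0A]].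
    by rewrite big_set0; apply: sumr_ge0 => -[y|[]] _ //=; apply: nu_ge0.
  rewrite big_sumType /= (big_pred1 tt) => [|[]]; last first.
    by rewrite /= eqxx; apply/nbhdP; exists x0.
  have -> : \sum_(y | inl y \in nbhd r' A) nu y = \sum_(y in nbhd r A) nu y.
    by apply: eq_bigl => y; rewrite !inE.
  exact: hall_eps.
have [pi' [pi'_ge0 pi'_out pi'_row pi'_col]] := hall_transport ok.
pose a x := pi' x (inr tt).
pose b y := nu y - \sum_x pi' x (inl y).
have a_ge0 x : 0 <= a x := pi'_ge0 x (inr tt).
have b_ge0 y : 0 <= b y by rewrite subr_ge0 (pi'_col (inl y)).
have row x : \sum_y pi' x (inl y) + a x = mu x.
  by rewrite -(pi'_row x (in_setT x)) big_sumType /= (big_pred1 tt) // => -[].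
have sum_ba : \sum_y b y = \sum_x a x.
  rewrite sumrB nu1 exchange_big /=.
  under eq_bigr => x _ do rewrite -(addrK (a x) (\sum_y pi' x (inl y))) row.
  by rewrite sumrB mu1 subKr.
have c_le_eps : \sum_x a x <= eps by exact: pi'_col (inr tt).
exists (fun x y => pi' x (inl y) + a x * b y / \sum_x a x).
  apply: (coupling_complete (fun x y => pi'_ge0 x (inl y)) a_ge0 b_ge0 sum_ba row) => y.
  by rewrite addrC subrK.
apply: (@le_trans _ _ (\sum_q a q.1 * b q.2 / \sum_x a x)).
  rewrite /off_mass (eq_bigr (fun q => a q.1 * b q.2 / \sum_x a x)) => [|q nr].
    by apply: ler_sum_subpred => // q; apply: divr_ge0; [exact: mulr_ge0 | exact: sumr_ge0].
  by rewrite pi'_out ?add0r // inE.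
rewrite -mulr_suml -(pair_bigA _ (fun x y => a x * b y)) /= -big_distrlr /= sum_ba.
by case: (eqVneq (\sum_x a x) 0) => [->|c_neq0]; rewrite ?mulr0 ?mul0r ?mulfK.
Qed.

Lemma coupling_sum_fst mu nu pi (A : {set X}) : coupling mu nu pi ->
  \sum_(x in A) mu x = \sum_(q | q.1 \in A) pi q.1 q.2.
Proof.
case=> _ row _; under eq_bigr => x _ do rewrite -row.
by rewrite pair_big /=; apply: eq_bigl => q; rewrite andbT.
Qed.

Lemma coupling_mass_fst r mu nu pi (A : {set X}) : coupling mu nu pi ->
  \sum_(x in A) mu x <= \sum_(q | (q.1 \in A) && r q.1 q.2) pi q.1 q.2 + off_mass r pi.
Proof.
move=> cpl; have [pi_ge0 _ _] := cpl.
rewrite (coupling_sum_fst A cpl) (bigID (fun q => r q.1 q.2)) /= lerD2l.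
by apply: ler_sum_subpred => [q /andP[]|q] //; apply: pi_ge0.
Qed.

Lemma coupling_mass_le r mu nu pi (C : {set X * Y}) : coupling mu nu pi ->
  \sum_(q in C) pi q.1 q.2 <=
  \sum_(x in [set x | [exists y, ((x, y) \in C) && r x y]]) mu x + off_mass r pi.
Proof.
move=> cpl; have [pi_ge0 _ _] := cpl.
rewrite (coupling_sum_fst _ cpl) (bigID (fun q => r q.1 q.2)) /=.
apply: lerD; last by apply: ler_sum_subpred => [q /andP[]|q] //; apply: pi_ge0.
apply: ler_sum_subpred => [q /andP[qC rq]|q]; last exact: pi_ge0.
by rewrite inE; apply/existsP; exists q.2; rewrite -surjective_pairing qC.
Qed.

End Coupling.

Section DirectSum.
Variables (R : realType) (AP : Type) (S1 S2 : finType).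
Variables (M1 : ctmc R AP S1) (M2 : ctmc R AP S2).

Lemma sumP_ge0 x y : 0 <= sumP M1 M2 x y.
Proof. by case: x y => [s|s] [t|t] //=; apply: ctP_ge0. Qed.

Lemma Pset_inl s A : Pset (sumP M1 M2) (inl s) A = Pset (ctP M1) s (inl @^-1: A).
Proof.
rewrite /Pset big_sumType /= [X in _ + X]big1 ?addr0 //.
by apply: eq_bigl => t; rewrite inE.
Qed.

Lemma Pset_inr s A : Pset (sumP M1 M2) (inr s) A = Pset (ctP M2) s (inr @^-1: A).
Proof.
rewrite /Pset big_sumType /= [X in X + _]big1 ?add0r //.
by apply: eq_bigl => t; rewrite inE.
Qed.

End DirectSum.

Lemma Pset_rel_image (R : realType) (S : finType) (P : S -> S -> R) (Rl : rel S) s A :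
  (forall s t, 0 <= P s t) -> reflexive Rl -> Pset P s A <= Pset P s (rel_image Rl A).
Proof.
move=> P_ge0 Rl_refl; apply: ler_sum_subpred => // t tA.
by rewrite inE; apply/existsP; exists t; rewrite tA Rl_refl.
Qed.

Lemma ed_bisim_hall (R : realType) (AP : Type) (S1 S2 : finType)
    (M1 : ctmc R AP S1) (M2 : ctmc R AP S2) (eps delta : R) (Rl : rel (S1 + S2)) m n :
  is_ed_bisim (sumP M1 M2) (sumE M1 M2) (sumL M1 M2) eps delta Rl -> Rl (inl m) (inr n) ->
  forall A : {set S1}, \sum_(x in A) ctP M1 m x <=
    \sum_(y in nbhd (fun x y => Rl (inl x) (inr y)) A) ctP M2 n y + eps.
Proof.
move=> [_ [_ Rl_cond]] /Rl_cond[_ _ le_Pset] A.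
have := le_Pset (inl @: A); rewrite Pset_inl Pset_inr.
have -> : inl @^-1: (@inl _ S2 @: A) = A.
  by apply/setP => x; rewrite inE mem_imset //; apply: inl_inj.
have -> // : inr @^-1: rel_image Rl (inl @: A) = nbhd (fun x y => Rl (inl x) (inr y)) A.
apply/setP => y; apply/idP/nbhdP => [|[x xA Rxy]].
  by rewrite !inE => /existsP[_ /andP[/imsetP[x xA ->] Rxy]]; exists x.
by rewrite !inE; apply/existsP; exists (inl x); rewrite imset_f.
Qed.

Section Lumping.
Variables (S T : finType) (f : S -> T).

Definition lump (x : S + T) : T := match x with inl s => f s | inr v => v end.

Definition lump_rel : rel (S + T) := fun x y => lump x == lump y.

Lemma lump_rel_refl : reflexive lump_rel.
Proof. by move=> x; apply: eqxx. Qed.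

Lemma rel_image_lump A : rel_image lump_rel A = lump @^-1: (lump @: A).
Proof.
apply/setP => y; rewrite !inE; apply/existsP/imsetP => [[x /andP[xA /eqP lxy]]|[x xA lyx]].
  by exists x; rewrite ?lxy.
by exists x; rewrite xA /lump_rel lyx eqxx.
Qed.

Variables (R : realType) (AP : Type) (M : ctmc R AP S) (N : ctmc R AP T).
Hypothesis lumpP : forall s v, \sum_(t | f t == v) ctP M s t = ctP N (f s) v.

Lemma Pset_lump x (V : {set T}) : Pset (sumP M N) x (lump @^-1: V) = Pset (ctP N) (lump x) V.
Proof.
case: x => [s|v]; rewrite ?Pset_inl ?Pset_inr /Pset /=; last first.
  by apply: eq_bigl => w; rewrite !inE.
rewrite (partition_big f (mem V)) => [|t]; last by rewrite !inE.
apply: eq_bigr => v vV; rewrite -lumpP; apply: eq_bigl => t.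
by rewrite !inE /= andb_idl // => /eqP ->.
Qed.

Lemma lump_strong_bisimilar : (forall s, ctE M s = ctE N (f s)) ->
  (forall s, ctL M s = ctL N (f s)) -> f (ctinit M) = ctinit N -> strong_bisimilar M N.
Proof.
move=> fE fL f_init; exists lump_rel; split; last exact/eqP.
split=> [x y z|x y /eqP lxy]; first by split=> [|/eqP lxy]; rewrite /lump_rel ?lxy.
have sumL_lump z : sumL M N z = ctL N (lump z) by case: z.
have sumE_lump z : sumE M N z = ctE N (lump z) by case: z.
have class_lump u : [set t | lump_rel u t] = lump @^-1: [set lump u].
  by apply/setP => t; rewrite !inE eq_sym.
by split=> [||u]; rewrite ?sumL_lump ?sumE_lump ?class_lump ?Pset_lump lxy.
Qed.

End Lumping.

Lemma ed_bisimilar_rates (R : realType) (AP : Type) (S : finType) (M N : ctmc R AP S)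
    (delta : R) : ctP M =2 ctP N -> ctL M =1 ctL N -> ctinit M = ctinit N ->
  (forall s, `|ln (ctE M s) - ln (ctE N s)| <= delta) -> ed_bisimilar 0 delta M N.
Proof.
move=> eq_P eq_L eq_init le_delta.
have lumpP s v : \sum_(t | id t == v) ctP M s t = ctP N (id s) v.
  by rewrite big_pred1_eq eq_P.
have delta_ge0 : 0 <= delta := le_trans (normr_ge0 _) (le_delta (ctinit M)).
have lump_refl := @lump_rel_refl _ _ (@id S).
exists (lump_rel id); split; last by rewrite /lump_rel /= eq_init.
split; first exact: lump_refl.
split=> [x y|x y /eqP lxy]; first exact: eq_sym.
split=> [||A].
- by case: x y lxy => s [t|t] /= <-; rewrite ?eq_L.
- by case: x y lxy => [s|s] [t|t] /= <-; rewrite ?subrr ?normr0 // distrC.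
- rewrite addr0; apply: le_trans (Pset_rel_image _ _ (@sumP_ge0 _ _ _ _ M N) lump_refl) _.
  by rewrite rel_image_lump !(Pset_lump lumpP) lxy.
Qed.

Section CoupledChain.
Variables (R : realType) (AP : Type) (SM SN : finType).
Variables (M : ctmc R AP SM) (N : ctmc R AP SN) (Rc : SM -> SN -> bool).
Variable pi : SM * SN -> SM -> SN -> R.
Hypothesis pi_coupling : forall p, coupling (ctP M p.1) (ctP N p.2) (pi p).

Definition coupledP (p q : SM * SN) := pi p q.1 q.2.

Lemma coupledP_ge0 p q : 0 <= coupledP p q.
Proof. by have [pi_ge0 _ _] := pi_coupling p; apply: pi_ge0. Qed.

Lemma coupledP_sum1 p : \sum_q coupledP p q = 1.
Proof.
have [_ row _] := pi_coupling p; rewrite -(ctP_sum1 M p.1) -(pair_bigA _ (pi p)).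
by apply: eq_bigr => x _; rewrite row.
Qed.

Definition coupled_rateM (p : SM * SN) := if Rc p.1 p.2 then ctE M p.1 else ctE N p.2.

Lemma coupled_rateM_gt0 p : 0 < coupled_rateM p.
Proof. by rewrite /coupled_rateM; case: ifP => _; apply: ctE_gt0. Qed.

Definition coupled_M : ctmc R AP (SM * SN)%type :=
  Ctmc (ctinit M, ctinit N) (fun p => ctL N p.2) coupledP_ge0 coupledP_sum1 coupled_rateM_gt0.

Definition coupled_N : ctmc R AP (SM * SN)%type :=
  Ctmc (ctinit M, ctinit N) (fun p => ctL N p.2) coupledP_ge0 coupledP_sum1
    (fun p => ctE_gt0 N p.2).

Lemma coupled_same_graph : same_graph coupled_M coupled_N.
Proof. by []. Qed.

Lemma coupled_N_strong_bisimilar : strong_bisimilar coupled_N N.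
Proof.
apply: (@lump_strong_bisimilar _ _ snd) => // p v.
have [_ _ col] := pi_coupling p; rewrite -col.
rewrite [RHS](eq_bigr (fun x => \sum_(y | y == v) pi p x y)) => [|x _]; last first.
  by rewrite big_pred1_eq.
by rewrite pair_big.
Qed.

Lemma coupled_ed_bisimilar (delta : R) : 0 <= delta ->
  (forall m n, Rc m n -> `|ln (ctE M m) - ln (ctE N n)| <= delta) ->
  ed_bisimilar 0 delta coupled_M coupled_N.
Proof.
move=> delta_ge0 Rc_E; apply: ed_bisimilar_rates => // p.
by rewrite /= /coupled_rateM; case: ifP => [/Rc_E //|_]; rewrite subrr normr0.
Qed.

Variable eps : R.
Hypothesis pi_off : forall p, Rc p.1 p.2 -> off_mass Rc (pi p) <= eps.

Definition proj_link (x y : SM + SM * SN) :=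
  match x, y with inl m, inr p => (p.1 == m) && Rc m p.2 | _, _ => false end.

Definition proj_rel x y := [|| x == y, proj_link x y | proj_link y x].

Lemma proj_rel_refl : reflexive proj_rel.
Proof. by move=> x; rewrite /proj_rel eqxx. Qed.

Lemma Pset_proj_inl p A : Rc p.1 p.2 ->
  Pset (sumP M coupled_M) (inl p.1) A <=
  Pset (sumP M coupled_M) (inr p) (rel_image proj_rel A) + eps.
Proof.
move=> Rp; rewrite Pset_inl Pset_inr.
apply: le_trans (coupling_mass_fst Rc _ (pi_coupling p)) _; apply: lerD (pi_off Rp).
apply: ler_sum_subpred => [q /andP[qA Rq]|q]; last exact: coupledP_ge0.
rewrite inE in qA; rewrite !inE; apply/existsP; exists (inl q.1).
by rewrite qA /proj_rel /= eqxx Rq.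
Qed.

Lemma Pset_proj_inr p A : Rc p.1 p.2 ->
  Pset (sumP M coupled_M) (inr p) A <=
  Pset (sumP M coupled_M) (inl p.1) (rel_image proj_rel A) + eps.
Proof.
move=> Rp; rewrite Pset_inr Pset_inl.
apply: le_trans (coupling_mass_le Rc _ (pi_coupling p)) _; apply: lerD (pi_off Rp).
apply: ler_sum_subpred => [x|x]; last exact: ctP_ge0.
rewrite !inE => /existsP[y /andP[xyA Rxy]]; apply/existsP; exists (inr (x, y)).
by rewrite inE in xyA; rewrite xyA /proj_rel /= eqxx Rxy.
Qed.

Lemma M_coupled_ed_bisimilar : 0 <= eps ->
  (forall m n, Rc m n -> ctL M m = ctL N n) -> Rc (ctinit M) (ctinit N) ->
  ed_bisimilar eps 0 M coupled_M.
Proof.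
move=> eps_ge0 Rc_L Rc_init; exists proj_rel; split; last first.
  by rewrite /proj_rel /= eqxx Rc_init.
split; first exact: proj_rel_refl.
split=> [x y|x y]; first by rewrite /proj_rel eq_sym (orbC (proj_link x y)).
case/or3P=> [/eqP <-|link|link].
- split=> // [|A]; first by rewrite subrr normr0.
  rewrite -[X in X <= _]addr0 lerD // Pset_rel_image //; last exact: proj_rel_refl.
  exact: sumP_ge0.
- case: x y link => [m|?] [?|p] //= /andP[/eqP <- Rp].
  split=> [||A]; [exact: Rc_L | | exact: Pset_proj_inl].
  by rewrite /= /coupled_rateM Rp subrr normr0.
- case: x y link => [?|p] [m|?] //= /andP[/eqP <- Rp].
  split=> [||A]; [exact/esym/Rc_L | | exact: Pset_proj_inr].
  by rewrite /= /coupled_rateM Rp subrr normr0.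
Qed.

End CoupledChain.

Theorem theorem3 (R : realType) (AP : Type) (SM SN : finType)
    (eps delta : R) (M : ctmc R AP SM) (N : ctmc R AP SN) :
  0 <= eps -> 0 <= delta ->
  ed_bisimilar eps delta M N ->
  exists (S' : finType) (M' N' : ctmc R AP S'),
    [/\ same_graph M' N',
        ed_bisimilar eps 0 M M',
        ed_bisimilar 0 delta M' N'
      & strong_bisimilar N' N].
Proof.
move=> eps_ge0 delta_ge0 [Rl [Rl_bisim Rl_init]]; have [_ [_ Rl_cond]] := Rl_bisim.
pose Rc m n := Rl (inl m) (inr n).
have /choice[pi pi_spec] : forall p : SM * SN, exists pi : SM -> SN -> R,
    coupling (ctP M p.1) (ctP N p.2) pi /\ (Rc p.1 p.2 -> off_mass Rc pi <= eps).
  move=> [m n] /=; case: (boolP (Rc m n)) => [Rmn|_].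
    have [pi cpl off] := eps_coupling eps_ge0 (ctP_ge0 M m) (ctP_ge0 N n)
      (ctP_sum1 M m) (ctP_sum1 N n) (ed_bisim_hall Rl_bisim Rmn).
    by exists pi.
  exists (fun x y => ctP M m x * ctP N n y); split=> //.
  by apply: coupling_prod; apply: ctP_ge0 || apply: ctP_sum1.
have pi_coupling p := (pi_spec p).1.
exists (SM * SN)%type, (coupled_M Rc pi_coupling), (coupled_N pi_coupling); split.
- exact: coupled_same_graph.
- apply: M_coupled_ed_bisimilar => // [p|m n /Rl_cond[] //]; exact: (pi_spec p).2.
- by apply: coupled_ed_bisimilar => // m n /Rl_cond[].
- exact: coupled_N_strong_bisimilar.
Qed.
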